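(* Let $k,m,t$ be positive integers with $m+t\le k$ and let $q$ be a prime power. Let $B$ be the bipartite graph whose left (user) vertex set is the set $\mathbb{V}$ of all $t$-dimensional subspaces of $\mathbb{F}_q^k$, whose right (subfile) vertex set is the set $\mathbb{X}$ of all $(m+t)$-dimensional subspaces of $\mathbb{F}_q^k$, and in which $V\in\mathbb{V}$ is adjacent to $X\in\mathbb{X}$ if and only if $V\subseteq X$. Then $B$ is a $(K,F,D)$ bipartite caching graph (for some $D$) with $K=\binom{k}{t}_q$ and $F=\binom{k}{m+t}_q$, and $B$ admits an induced matching cover consisting of $S=\binom{k}{m}_q$ induced matchings each having $g=\binom{k-m}{t}_q$ edges. Consequently (for a library of $N\ge K$ files) it defines a coded caching scheme with $K=\binom{k}{t}_q$ users, subpacketization $F=\binom{k}{m+t}_q$, cache fraction $$\frac{M}{N}=1-\frac{\binom{k-t}{m}_q}{\binom{k}{m+t}_q},$$ rate $R=\binom{k}{m}_q\big/\binom{k}{m+t}_q$, and global caching gain $\gamma=\binom{k-m}{t}_q$.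
   Context: For a prime power $q$ and integers $0\le b\le a$, the Gaussian binomial coefficient is $\binom{a}{b}_q=\frac{(q^a-1)(q^{a-1}-1)\cdots(q^{a-b+1}-1)}{(q^b-1)\cdots(q-1)}$ (with $\binom{a}{0}_q=1$); it equals the number of $b$-dimensional subspaces of an $a$-dimensional vector space over $\mathbb{F}_q$. Coded caching setup: a server holds $N$ files $W_1,\dots,W_N$ and is connected by an error-free broadcast link to $K$ users, each having a cache able to store $M$ files; it is assumed throughout that $N\ge K$. Each file is split into $F$ equal-size subfiles $W_{i,f}$, $f\in\mathcal{F}$, $|\mathcal{F}|=F$ ($F$ is the subpacketization). Caching is done before demands are known and is symmetric: for every user $k$ and index $f$, user $k$ caches either $W_{i,f}$ for all $i\in[N]$ or for no $i$. In the delivery phase every user demands one file and the server broadcasts transmissions, each of the size of one subfile, so that every user can recover its demanded file from its cache and the transmissions, for every demand vector. The rate is $R=(\text{number of transmissions})/F$ and the global caching gain is $\gamma=K(1-M/N)/R$. A $(K,F,D)$ bipartite caching graph is a bipartite graph with $K$ left (user) vertices and $F$ right (subfile) vertices in which every left vertex has degree $D$; it defines the symmetric caching scheme in which user $k$ does not cache the subfiles with index $f$ exactly when $\{k,f\}$ is an edge (so $M/N=1-D/F$). An induced matching of a bipartite graph $B$ is a set $\mathcal{C}\subseteq E(B)$ such that for any two distinct edges $\{k_1,f_1\},\{k_2,f_2\}\in\mathcal{C}$ we have $k_1\ne k_2$, $f_1\ne f_2$ and $\{k_1,f_2\},\{k_2,f_1\}\notin E(B)$. An induced matching cover of $B$ is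 a set of induced matchings that partitions $E(B)$. (Each induced matching $\{\{k_i,f_i\}\}_{i}$ yields the transmission $\sum_i W_{d_{k_i},f_i}$, where $W_{d_k}$ is the file demanded by user $k$.) *)

From HB Require Import structures.
From mathcomp Require Import all_boot all_order all_algebra.
Set Implicit Arguments. Unset Strict Implicit. Unset Printing Implicit Defensive.
Import GRing.Theory Num.Theory.

(* Gaussian binomial coefficient [a choose b]_q (for b <= a; 0 otherwise).
   The nat division is exact. *)
Definition gauss_binom (q a b : nat) : nat :=
  if b <= a then
    (\prod_(i < b) (q ^ (a - i) - 1)) %/ (\prod_(i < b) (q ^ i.+1 - 1))
  else 0.

(* Subspaces of F^k, represented canonically by their row-space matrix
   <<A>>%MS (a k x k matrix); dimension = rank. *)
Definition subspaces (F : finFieldType) (k d : nat) : {set 'M[F]_k} :=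
  [set A : 'M[F]_k | (<<A>>%MS == A) && (\rank A == d)].

Section Bipartite.
Variables (T U : finType) (L : {set T}) (R : {set U}) (e : T -> U -> bool).

Definition bedges : {set T * U} := [set p in setX L R | e p.1 p.2].

Definition nbhd (v : T) : {set U} := [set x in R | e v x].

Definition caching_graph (K Fn D : nat) : Prop :=
  #|L| = K /\ #|R| = Fn /\ forall v, v \in L -> #|nbhd v| = D.

Definition induced_matching (C : {set T * U}) : bool :=
  (C \subset bedges) &&
  [forall p1 in C, forall p2 in C, (p1 != p2) ==>
     [&& p1.1 != p2.1, p1.2 != p2.2, ~~ e p1.1 p2.2 & ~~ e p2.1 p1.2]].

Definition induced_matching_cover (P : {set {set T * U}}) : bool :=
  partition P bedges && [forall C in P, induced_matching C].
End Bipartite.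

Local Open Scope ring_scope.
Definition cache_fraction (D Fn : nat) : rat := 1 - D%:R / Fn%:R.
Definition caching_rate (S Fn : nat) : rat := S%:R / Fn%:R.
Definition caching_gain (K : nat) (MN R : rat) : rat := K%:R * (1 - MN) / R.

(* Call an m-space Y and a t-space V complementary in an (m + t)-space X when
   X = Y (+) V.  For a fixed X, every Y has q^(mt) complements V and every V has
   q^(mt) complements Y, so the bipartite graph joining flags (Y <= X) to edges (V <= X)
   of the caching graph through complementarity is regular; by Hall's theorem it has a
   perfect matching f.  The edges matched to the flags with a given Y form an induced
   matching: if V1 <= X2 for two of them, X1 and X2 both contain the (m + t)-space
   Y + V1, hence coincide.  These blocks, one per m-space Y, partition the edges, and the
   block of Y has one edge per (m + t)-space above Y.  All the counts of subspaces come
   from counting ordered bases ("frames"). *)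

From HB Require Import structures.
From mathcomp Require Import all_boot all_order all_algebra zify ring.
Import GRing.Theory Num.Theory.
Set Implicit Arguments. Unset Strict Implicit. Unset Printing Implicit Defensive.

Section RankAdds.
Variables (F : fieldType) (k : nat).

Lemma mxrank_adds_row p (C : 'M[F]_(p, k)) (v : 'rV_k) :
  \rank (C + v)%MS = \rank C + ~~ (v <= C)%MS.
Proof.
have le_rCv : \rank (C + v)%MS <= \rank C + 1.
  exact: leq_trans (mxrank_adds_leqif C v) (leq_add (leqnn _) (rank_leq_row v)).
have [le_rC] := mxrank_leqif_sup (addsmxSl C v).
rewrite addsmx_sub submx_refl /= => eq_rC.
case: (boolP (v <= C)%MS) => vC; apply/eqP.
  by rewrite addn0 eq_sym eq_rC.
by rewrite eqn_leq le_rCv addn1 ltn_neqAle eq_rC vC le_rC.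
Qed.

Lemma mxrank_adds_col_mx p s (U : 'M[F]_(p, k)) (v : 'rV_k) (A : 'M_(s, k)) :
  (\rank (U + col_mx v A)%MS == \rank U + s.+1) =
  (\rank (U + A)%MS == \rank U + s) && ~~ (v <= U + A)%MS.
Proof.
have -> : \rank (U + col_mx v A)%MS = \rank (U + A + v)%MS.
  by rewrite (adds_eqmx (eqmx_refl U) (eqmx_sym (addsmxE v A))) (addsmxC v A) addsmxA.
have le_rUA : \rank (U + A)%MS <= \rank U + s.
  exact: leq_trans (mxrank_adds_leqif U A) (leq_add (leqnn _) (rank_leq_row A)).
rewrite mxrank_adds_row addnS; case: (v <= U + A)%MS; last by rewrite addn1 eqSS andbT.
by rewrite addn0 andbF; apply: negbTE; rewrite neq_ltn ltnS le_rUA.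
Qed.

Lemma row_free_adds p s (U : 'M[F]_(p, k)) (M : 'M_(s, k)) :
  \rank (U + M)%MS = \rank U + s -> row_free M.
Proof.
move=> rUM; rewrite /row_free eqn_leq rank_leq_row -(leq_add2l (\rank U)) -rUM.
exact: mxrank_adds_leqif.
Qed.

End RankAdds.

Section Frames.
Variables (F : finFieldType) (k : nat).
Local Notation q := #|F|.

Lemma card_submx_rows p (B : 'M[F]_(p, k)) :
  #|[set v : 'rV_k | (v <= B)%MS]| = q ^ \rank B.
Proof.
have -> : [set v : 'rV_k | (v <= B)%MS] = [set (u *m row_base B)%R | u in 'rV_(\rank B)].
  apply/setP => v; rewrite inE -(eq_row_base B); apply/idP/imsetP.
    by case/submxP => u ->; exists u.
  by case=> u _ ->; apply: submxMl.
by rewrite card_imset ?card_mx ?mul1n //; apply: row_free_inj (row_base_free B).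
Qed.

Lemma card_submx_rows_notin p1 p2 (X : 'M[F]_(p1, k)) (C : 'M_(p2, k)) :
  (C <= X)%MS ->
  #|[set v : 'rV_k | (v <= X)%MS && ~~ (v <= C)%MS]| = q ^ \rank X - q ^ \rank C.
Proof.
move=> sCX; rewrite -!card_submx_rows -(setIidPr (_ : [set v | (v <= C)%MS] \subset
  [set v | (v <= X)%MS])) -?cardsD; last by apply/subsetP => v; rewrite !inE => /submx_trans->.
by apply: eq_card => v; rewrite !inE andbC.
Qed.

Lemma card_indep_frames p1 p2 s (U : 'M[F]_(p1, k)) (X : 'M_(p2, k)) :
  (U <= X)%MS ->
  #|[set M : 'M_(s, k) | (M <= X)%MS && (\rank (U + M)%MS == \rank U + s)]| =
  \prod_(i < s) (q ^ \rank X - q ^ (\rank U + i)).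
Proof.
move=> sUX; elim: s => [|s IHs].
  rewrite big_ord0 -(card1 (0%R : 'M[F]_(0, k))); apply: eq_card => M.
  rewrite !inE [M]flatmx0 sub0mx addn0 eqxx /=.
  by apply/eqP/eqmx_rank; rewrite addsmx_sub submx_refl sub0mx addsmxSl.
set frames := fun s => [set M : 'M_(s, k) | (M <= X)%MS && (\rank (U + M)%MS == \rank U + s)].
rewrite big_ord_recr /= -IHs -sum_nat_const -sum1_card.
rewrite (partition_big (@dsubmx F 1 s k) (mem (frames s))) /=; last first.
  move=> M; rewrite !inE -{1 2}(vsubmxK M) (@col_mx_sub _ 1 s k) mxrank_adds_col_mx.
  by case/andP=> /andP[_ ->] /andP[-> _].
apply: eq_bigr => A; rewrite inE => /andP[AX /eqP rUA].
rewrite (reindex (col_mx^~ A)) /=; last first.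
  exists (@usubmx F 1 s k) => [v _ | M]; first by rewrite col_mxKu.
  by case/andP=> _ /eqP <-; rewrite vsubmxK.
rewrite -rUA -card_submx_rows_notin ?addsmx_sub ?sUX // -sum1_card.
apply: eq_bigl => v; rewrite !inE col_mxKd eqxx andbT (@col_mx_sub _ 1 s k).
by rewrite mxrank_adds_col_mx AX rUA eqxx /= andbT.
Qed.

End Frames.

Section GaussBinom.
Variable q : nat.
Hypothesis q_gt1 : 1 < q.

Lemma prod_expn_subDl a n s :
  \prod_(i < s) (q ^ (a + n) - q ^ (a + i)) = q ^ (a * s) * \prod_(i < s) (q ^ n - q ^ i).
Proof.
rewrite (eq_bigr (fun i : 'I_s => q ^ a * (q ^ n - q ^ i))); last first.
  by move=> i _; rewrite mulnBr -!expnD.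
by rewrite big_split /= prod_nat_const card_ord expnM.
Qed.

Lemma prod_expn_sub_gt0 n s : s <= n -> 0 < \prod_(i < s) (q ^ n - q ^ i).
Proof.
move=> le_sn; apply: prodn_gt0 => i; rewrite subn_gt0 ltn_exp2l //.
exact: leq_trans (ltn_ord i) le_sn.
Qed.

Lemma prod_expn_sub_factor n s : s <= n ->
  \prod_(i < s) (q ^ n - q ^ i) = \prod_(i < s) q ^ i * \prod_(i < s) (q ^ (n - i) - 1).
Proof.
move=> le_sn; rewrite -big_split /=; apply: eq_bigr => i _.
by rewrite mulnBr muln1 -expnD subnKC // ltnW // (leq_trans (ltn_ord i)).
Qed.

(* [\prod_(i < b) (q ^ n - q ^ i)] is the number of [b]-frames in [F_q^n]. *)
Lemma gauss_binom_frames n b x : b <= n ->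
  x * \prod_(i < b) (q ^ b - q ^ i) = \prod_(i < b) (q ^ n - q ^ i) ->
  gauss_binom q n b = x.
Proof.
move=> le_bn; rewrite !prod_expn_sub_factor // mulnCA => /eqP.
rewrite eqn_pmul2l => [/eqP eq_x|]; last by apply: prodn_gt0 => i; rewrite expn_gt0 ltnW.
have rev_b : \prod_(i < b) (q ^ (b - i) - 1) = \prod_(i < b) (q ^ i.+1 - 1).
  by rewrite (reindex_inj rev_ord_inj); apply: eq_bigr => i _; rewrite subKn.
rewrite /gauss_binom le_bn -eq_x -rev_b mulnK // rev_b; apply: prodn_gt0 => i.
by rewrite subn_gt0 -{1}(expn0 q) ltn_exp2l.
Qed.

Lemma gauss_binom_gt0 n b : b <= n -> 0 < gauss_binom q n b.
Proof.
move=> le_bn; rewrite /gauss_binom le_bn divn_gt0; last first.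
  by apply: prodn_gt0 => i; rewrite subn_gt0 -{1}(expn0 q) ltn_exp2l.
rewrite (reindex_inj rev_ord_inj); apply: leq_prod => i _ /=.
rewrite leq_sub2r // leq_pexp2l ?(ltnW q_gt1) //; have := ltn_ord i; lia.
Qed.

End GaussBinom.

Section Subspaces.
Variables (F : finFieldType) (k : nat).
Local Notation q := #|F|.

Definition indep_subspaces (U X : 'M[F]_k) (s : nat) : {set 'M[F]_k} :=
  [set W in subspaces F k s | (W <= X)%MS && (\rank (U + W)%MS == \rank U + s)].

Definition superspaces (V : 'M[F]_k) (d : nat) : {set 'M[F]_k} :=
  [set X in subspaces F k d | (V <= X)%MS].

Lemma rank_subspaces d (X : 'M[F]_k) : X \in subspaces F k d -> \rank X = d.
Proof. by rewrite inE => /andP[_ /eqP]. Qed.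

Lemma subspace_eq_genmx p d (A : 'M[F]_(p, k)) (X : 'M[F]_k) :
  X \in subspaces F k d -> (A <= X)%MS -> \rank A = d -> <<A>>%MS = X.
Proof.
rewrite inE => /andP[/eqP gX /eqP rX] AX rA; rewrite -gX; apply/genmxP.
by rewrite -(mxrank_leqif_eq AX) rA rX.
Qed.

Lemma card_indep_subspaces (U X : 'M[F]_k) s :
  (U <= X)%MS ->
  #|indep_subspaces U X s| * \prod_(i < s) (q ^ s - q ^ i) =
  \prod_(i < s) (q ^ \rank X - q ^ (\rank U + i)).
Proof.
move=> sUX; rewrite -(card_indep_frames s sUX) -[RHS]sum1_card.
rewrite (partition_big (fun M : 'M_(s, k) => <<M>>%MS) (mem (indep_subspaces U X s))) /=;
  last first.
  move=> M; rewrite !inE => /andP[MX /eqP rUM].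
  rewrite genmx_id mxrank_gen (eqP (row_free_adds rUM)) genmxE MX.
  by rewrite (adds_eqmx (eqmx_refl U) (genmxE M)) rUM !eqxx.
rewrite -sum_nat_const; apply: eq_bigr => W; rewrite !inE => /andP[/andP[/eqP gW /eqP rW]].
case/andP=> WX /eqP rUW.
have -> : \prod_(i < s) (q ^ s - q ^ i) =
           \prod_(i < s) (q ^ \rank W - q ^ (\rank (0%R : 'M[F]_k) + i)).
  by apply: eq_bigr => i _; rewrite mxrank0 rW.
rewrite -(card_indep_frames s (sub0mx k W)) -sum1_card; apply: eq_bigl => M.
rewrite !inE (adds0mx k M) mxrank0 add0n.
apply/andP/andP => [[MW /eqP rM] | [/andP[MX rUM] /eqP gM]]; last first.
  by rewrite -gM genmxE (eqP (row_free_adds (eqP rUM))).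
have eqMW : (M == W)%MS by rewrite -(mxrank_leqif_eq MW) rM rW.
rewrite (submx_trans MW WX) (adds_eqmx (eqmx_refl U) (eqmxP eqMW)) rUW eqxx.
by rewrite -gW; split=> //; apply/eqP/genmxP.
Qed.

Lemma card_indep_subspaces_compl (U X : 'M[F]_k) s :
  (U <= X)%MS -> \rank X = \rank U + s ->
  #|indep_subspaces U X s| = q ^ (\rank U * s).
Proof.
move=> sUX rX; have /eqP := card_indep_subspaces s sUX.
rewrite rX prod_expn_subDl eqn_pmul2r; first by move/eqP.
exact: prod_expn_sub_gt0 (card_finNzRing_gt1 F) _ _ (leqnn s).
Qed.

(* Each [W] independent from [V] lies in exactly one superspace [<<V + W>>] of [V]. *)
Lemma card_indep_subspaces1 (V : 'M[F]_k) b :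
  #|indep_subspaces V 1%:M b| = #|superspaces V (\rank V + b)| * q ^ (\rank V * b).
Proof.
rewrite -sum1_card.
rewrite (partition_big (fun W => <<(V + W)%MS>>%MS) (mem (superspaces V (\rank V + b)))) /=.
  rewrite -sum_nat_const; apply: eq_bigr => X.
  rewrite !inE => /andP[/andP[/eqP gX /eqP rX] VX].
  rewrite -(card_indep_subspaces_compl VX) ?rX // -sum1_card; apply: eq_bigl => W.
  rewrite !inE submx1.
  apply/andP/and3P => [[/andP[-> /andP[_ rUW]] /eqP <-] | [-> WX /eqP rUW]].
    by split=> //; rewrite genmxE addsmxSr.
  have eq_VW : (V + W == X)%MS.
    by rewrite -(mxrank_leqif_eq (_ : (V + W <= X)%MS)) ?addsmx_sub ?VX ?WX // rUW rX.
  rewrite rUW eqxx -gX; split=> //; exact/eqP/genmxP.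
move=> W; rewrite !inE => /andP[_ /andP[_ /eqP rUW]].
by rewrite genmx_id mxrank_gen rUW !eqxx genmxE addsmxSl.
Qed.

Lemma card_superspaces (V : 'M[F]_k) a b :
  \rank V = a -> a + b <= k -> #|superspaces V (a + b)| = gauss_binom q (k - a) b.
Proof.
move=> rV le_abk; have q_gt1 := card_finNzRing_gt1 F.
have le_b : b <= k - a by rewrite leq_subRL // (leq_trans (leq_addr b a)).
symmetry; apply: (gauss_binom_frames q_gt1 le_b).
apply/eqP; rewrite -(@eqn_pmul2l (q ^ (a * b))); last by rewrite expn_gt0 ltnW.
rewrite -prod_expn_subDl subnKC; last exact: leq_trans (leq_addr b a) le_abk.
have := card_indep_subspaces b (submx1 V); rewrite mxrank1 rV => <-.
by rewrite card_indep_subspaces1 rV mulnCA mulnA.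
Qed.

Lemma card_subspaces d : d <= k -> #|subspaces F k d| = gauss_binom q k d.
Proof.
move=> le_dk; rewrite -[k in gauss_binom _ k](subn0 k) -(card_superspaces (mxrank0 F k k)) //.
by apply: eq_card => X; rewrite !inE sub0mx andbT add0n.
Qed.

End Subspaces.

Section Hall.
Variables (T U : finType) (r : T -> U -> bool).

Definition set_nbhd (R : {set U}) (B : {set T}) : {set U} :=
  [set y in R | [exists x in B, r x y]].

Definition hall_condition (A : {set T}) (R : {set U}) : Prop :=
  forall B : {set T}, B \subset A -> #|B| <= #|set_nbhd R B|.

Definition matching (A : {set T}) (R : {set U}) (f : T -> U) : Prop :=
  {in A &, injective f} /\ {in A, forall x, f x \in nbhd R r x}.

Lemma set_nbhd_sub (R : {set U}) (B : {set T}) : set_nbhd R B \subset R.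
Proof. by apply/subsetP => y; rewrite inE => /andP[]. Qed.

Lemma matching_widen (A : {set T}) (R1 R2 : {set U}) f :
  R1 \subset R2 -> matching A R1 f -> matching A R2 f.
Proof.
move=> sR12 [f_inj f_nbhd]; split=> // x /f_nbhd; rewrite !inE => /andP[fxR ->].
by rewrite (subsetP sR12).
Qed.

Lemma matching_glue (A B : {set T}) (R1 R2 : {set U}) f1 f2 :
  [disjoint R1 & R2] -> matching B R1 f1 -> matching (A :\: B) R2 f2 ->
  matching A (R1 :|: R2) (fun x => if x \in B then f1 x else f2 x).
Proof.
move=> dR [inj1 nb1] [inj2 nb2].
have in_R1 x : x \in B -> f1 x \in R1 by move/nb1; rewrite inE => /andP[].
have nb2' x : x \in A -> x \notin B -> f2 x \in nbhd R2 r x.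
  by move=> xA xB; apply: nb2; rewrite inE xB.
have in_R2 x : x \in A -> x \notin B -> f2 x \in R2.
  by move=> xA xB; have := nb2' x xA xB; rewrite inE => /andP[].
have R12 x1 x2 : x1 \in B -> x2 \in A -> x2 \notin B -> f1 x1 != f2 x2.
  move=> x1B x2A x2B; apply: contraTneq (in_R1 _ x1B) => ->.
  by rewrite (disjointFl dR) // in_R2.
split=> [x1 x2 x1A x2A | x xA] /=.
  case: (boolP (x1 \in B)) => x1B; case: (boolP (x2 \in B)) => x2B.
  - exact: inj1.
  - by move/eqP; rewrite (negbTE (R12 _ _ x1B x2A x2B)).
  - by move/esym/eqP; rewrite (negbTE (R12 _ _ x2B x1A x1B)).
  - by apply: inj2; rewrite inE ?x1B ?x2B.
case: (boolP (x \in B)) => xB.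
  by have := nb1 x xB; rewrite !inE => /andP[-> ->].
by have := nb2' x xA xB; rewrite !inE => /andP[-> ->]; rewrite orbT.
Qed.

Lemma hall_condition_nbhd (A B : {set T}) (R : {set U}) :
  hall_condition A R -> B \subset A -> hall_condition B (set_nbhd R B).
Proof.
move=> hallAR sBA C sCB; apply: leq_trans (hallAR C (subset_trans sCB sBA)) _.
apply/subset_leq_card/subsetP => y; rewrite !inE => /andP[yR /existsP[x /andP[xC rxy]]].
rewrite yR /=; apply/andP; split; apply/existsP; exists x; rewrite rxy andbT //.
exact: (subsetP sCB).
Qed.

Lemma hall_condition_tight (A B : {set T}) (R : {set U}) :
  hall_condition A R -> B \subset A -> #|set_nbhd R B| <= #|B| ->
  hall_condition (A :\: B) (R :\: set_nbhd R B).
Proof.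
move=> hallAR sBA tightB C sCAB.
have dCB : [disjoint C & B].
  by rewrite disjoints_subset (subset_trans sCAB) // setDE subsetIr.
have sCBA : C :|: B \subset A by rewrite subUset sBA (subset_trans sCAB (subsetDl A B)).
rewrite -(leq_add2r #|B|); have := hallAR _ sCBA.
rewrite cardsU (disjoint_setI0 dCB) cards0 subn0 => /leq_trans; apply.
apply: leq_trans (leq_add (leqnn _) tightB); apply: leq_trans (leq_card_setU _ _).
apply/subset_leq_card/subsetP => y; rewrite !inE => /andP[yR /existsP[x /andP[xCB rxy]]].
rewrite yR /= andbT; apply/orP.
case: (boolP [exists x in B, r x y]) => [NB | nNB]; [by right | left].
apply/existsP; exists x; rewrite rxy andbT.
move: xCB; rewrite inE => /orP[// | xB]; case/negP: nNB.
by apply/existsP; exists x; rewrite xB.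
Qed.

Lemma hall_condition_surplus (A : {set T}) (R : {set U}) a y :
  (forall B : {set T}, B \proper A -> B != set0 -> #|B| < #|set_nbhd R B|) -> a \in A ->
  hall_condition (A :\ a) (R :\ y).
Proof.
move=> surplus aA C sCA; have [-> | nC0] := eqVneq C set0; first by rewrite cards0.
have pCA : C \proper A.
  rewrite properEneq (subset_trans sCA (subsetDl _ _)) andbT.
  by apply: contraTneq sCA => ->; apply/subsetPn; exists a; rewrite // !inE eqxx.
rewrite -ltnS; apply: leq_trans (surplus C pCA nC0) _.
rewrite -add1n -(cards1 y); apply: leq_trans (leq_card_setU _ _).
apply/subset_leq_card/subsetP => z; rewrite !inE => /andP[zR exC].
by case: (eqVneq z y) => //=; rewrite zR exC.
Qed.

Theorem hall_marriage (y0 : U) (A : {set T}) (R : {set U}) :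
  hall_condition A R -> exists f, matching A R f.
Proof.
elim: {A}#|A|.+1 {-2}A (ltnSn #|A|) R => // n IHn A ltAn R hallAR.
have [-> | /set0Pn[a aA]] := eqVneq A set0.
  by exists (fun=> y0); split=> x; rewrite inE.
(* Either a nonempty proper [B] is tight, and [B] and [A :\: B] are matched separately into
   [set_nbhd R B] and its complement, or every such [B] has a surplus and any edge at [a]
   can be kept. *)
case: (boolP [exists B : {set T}, [&& B \proper A, B != set0 & #|set_nbhd R B| <= #|B|]]).
  case/existsP => B /and3P[pBA nB0 tightB]; have sBA := proper_sub pBA.
  have [f1 match1] := IHn B (leq_trans (proper_card pBA) ltAn) _ (hall_condition_nbhd hallAR sBA).
  have ltABA : #|A :\: B| < #|A|.
    by rewrite cardsD (setIidPr sBA) ltn_subrL !card_gt0 nB0; apply/set0Pn; exists a.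
  have [f2 match2] := IHn _ (leq_trans ltABA ltAn) _ (hall_condition_tight hallAR sBA tightB).
  exists (fun x => if x \in B then f1 x else f2 x).
  apply: matching_widen (matching_glue _ match1 match2).
    by rewrite subUset set_nbhd_sub subsetDl.
  by rewrite disjoint_sym disjoints_subset setDE subsetIr.
move=> noTight.
have surplus (B : {set T}) : B \proper A -> B != set0 -> #|B| < #|set_nbhd R B|.
  move=> pBA nB0; rewrite ltnNge; apply: contra noTight => tightB.
  by apply/existsP; exists B; rewrite pBA nB0 tightB.
have /set0Pn[y] : set_nbhd R [set a] != set0.
  by rewrite -card_gt0 -(cards1 a) hallAR // sub1set.
rewrite inE => /andP[yR /existsP[a' /andP[/set1P -> ray]]].
have [f2 match2] := IHn (A :\ a) (leq_trans (proper_card (properD1 aA)) ltAn) _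
  (hall_condition_surplus y surplus aA).
have match1 : matching [set a] [set y] (fun=> y).
  by split=> [x1 x2 /set1P -> /set1P -> | x /set1P ->] //; rewrite !inE eqxx.
exists (fun x => if x \in [set a] then y else f2 x).
apply: matching_widen (matching_glue _ match1 match2).
  by rewrite subUset sub1set yR subsetDl.
by rewrite disjoints1 !inE eqxx.
Qed.

End Hall.

Section Regular.
Variables (T U : finType) (r : T -> U -> bool).

Lemma double_count (A : {set T}) (R : {set U}) :
  \sum_(x in A) #|nbhd R r x| = \sum_(y in R) #|[set x in A | r x y]|.
Proof.
under eq_bigr do rewrite -sum1dep_card.
rewrite (exchange_big_dep (mem R)) /= => [|x y _ /andP[] //].
apply: eq_bigr => y yR; rewrite -sum1dep_card; apply: eq_bigl => x.
by rewrite yR.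
Qed.

Lemma card_bedges (A : {set T}) (R : {set U}) :
  #|bedges A R r| = \sum_(x in A) #|nbhd R r x|.
Proof.
under eq_bigr do rewrite -sum1dep_card.
rewrite pair_big_dep -sum1dep_card; apply: eq_bigl => -[x y].
by rewrite !inE andbA.
Qed.

Theorem regular_perfect_matching (y0 : U) (A : {set T}) (R : {set U}) d :
  0 < d -> {in A, forall x, #|nbhd R r x| = d} ->
  {in R, forall y, #|[set x in A | r x y]| = d} ->
  #|A| = #|R| /\ exists f, matching r A R f.
Proof.
move=> d_gt0 degA degR; split.
  apply/eqP; rewrite -(eqn_pmul2r d_gt0) -!sum_nat_const; apply/eqP.
  by rewrite -(eq_bigr _ degA) -(eq_bigr _ degR) double_count.
(* The [d * #|B|] edges at [B] end in [set_nbhd R B], each of whose vertices has degree [d]. *)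
apply: (hall_marriage (r := r) y0) => B sBA.
rewrite -(leq_pmul2r d_gt0) -!sum_nat_const.
have nbhdB x : x \in B -> nbhd R r x = nbhd (set_nbhd r R B) r x.
  move=> xB; apply/setP => y; rewrite !inE; case: (boolP (r x y)) => rxy; rewrite ?andbF //.
  by rewrite !andbT andb_idr // => _; apply/existsP; exists x; rewrite xB.
rewrite -(eq_bigr _ (fun x xB => degA x (subsetP sBA x xB))).
under eq_bigr => x xB do rewrite nbhdB //.
rewrite double_count.
rewrite -(eq_bigr _ (fun y yN => degR y (subsetP (set_nbhd_sub r R B) y yN))).
apply: leq_sum => y _; apply/subset_leq_card/subsetP => x; rewrite !inE.
by case/andP=> /(subsetP sBA) -> ->.
Qed.

End Regular.

Section SubspaceGraph.
Variables (F : finFieldType) (k : nat).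
Local Notation q := #|F|.

Definition flags (a b : nat) : {set 'M[F]_k * 'M[F]_k} :=
  bedges (subspaces F k a) (subspaces F k b) (fun V X => (V <= X)%MS).

Lemma mem_flags a b (V X : 'M[F]_k) :
  ((V, X) \in flags a b) = [&& V \in subspaces F k a, X \in subspaces F k b & (V <= X)%MS].
Proof. by rewrite inE in_setX andbA. Qed.

Lemma card_flags a b : a + b <= k ->
  #|flags a (a + b)| = gauss_binom q k a * gauss_binom q (k - a) b.
Proof.
move=> le_abk; rewrite card_bedges (eq_bigr (fun=> gauss_binom q (k - a) b)).
  by rewrite sum_nat_const card_subspaces // (leq_trans (leq_addr b a)).
by move=> V /rank_subspaces rV; apply: card_superspaces.
Qed.

End SubspaceGraph.

Section Complements.
Variables (F : finFieldType) (k m t : nat).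
Local Notation q := #|F|.

(* [p = (Y, X)] and [p' = (V, X)] are related when [X] is the direct sum of [Y] and [V]. *)
Definition complementary (p p' : 'M[F]_k * 'M[F]_k) : bool :=
  (p'.2 == p.2) && (\rank (p.1 + p'.1)%MS == m + t).

Lemma card_complementary_l p :
  p \in flags F k m (m + t) -> #|nbhd (flags F k t (m + t)) complementary p| = q ^ (m * t).
Proof.
case: p => Y X; rewrite mem_flags => /and3P[YS XS YX].
have [rY rX] := (rank_subspaces YS, rank_subspaces XS).
have -> : nbhd (flags F k t (m + t)) complementary (Y, X) =
          [set (V, X) | V in indep_subspaces Y X t].
  apply/setP => -[V X']; rewrite inE mem_flags /complementary /=; apply/andP/imsetP.
    case=> /and3P[VS _ VX'] /andP[/eqP eX rYV]; rewrite eX in VX' *; exists V => //.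
    by rewrite inE VS VX' rY rYV.
  case=> V1 + [-> ->]; rewrite inE => /andP[VS /andP[VX rYV]].
  by rewrite VS XS VX eqxx -rY rYV; split.
rewrite card_imset; last by move=> V1 V2 [].
by rewrite card_indep_subspaces_compl // rY.
Qed.

Lemma card_complementary_r p' : p' \in flags F k t (m + t) ->
  #|[set p in flags F k m (m + t) | complementary p p']| = q ^ (m * t).
Proof.
case: p' => V X; rewrite mem_flags => /and3P[VS XS VX].
have [rV rX] := (rank_subspaces VS, rank_subspaces XS).
have -> : [set p in flags F k m (m + t) | complementary p (V, X)] =
          [set (Y, X) | Y in indep_subspaces V X m].
  apply/setP => -[Y X']; rewrite inE mem_flags /complementary /=; apply/andP/imsetP.
    case=> /and3P[YS _ YX'] /andP[/eqP eX rYV]; rewrite -eX in YX' *; exists Y => //.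
    by rewrite inE YS YX' rV addsmxC addnC rYV.
  case=> Y1 + [-> ->]; rewrite inE => /andP[YS /andP[YX rVY]].
  by rewrite YS XS YX eqxx addsmxC addnC -rV rVY; split.
rewrite card_imset; last by move=> Y1 Y2 [].
by rewrite card_indep_subspaces_compl ?rV 1?addnC // mulnC.
Qed.

Lemma complementary_perfect_matching :
  #|flags F k m (m + t)| = #|flags F k t (m + t)| /\
  exists f, matching complementary (flags F k m (m + t)) (flags F k t (m + t)) f.
Proof.
apply: (regular_perfect_matching (r := complementary) (d := q ^ (m * t)) (0%R, 0%R)).
- by rewrite expn_gt0 ltnW // card_finNzRing_gt1.
- exact: card_complementary_l.
- exact: card_complementary_r.
Qed.

End Complements.

Section SubspaceCover.
Variables (F : finFieldType) (k m t : nat) (f : 'M[F]_k * 'M[F]_k -> 'M[F]_k * 'M[F]_k).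
Local Notation q := #|F|.
Local Notation left := (flags F k m (m + t)).
Local Notation right := (flags F k t (m + t)).
Hypothesis le_mtk : m + t <= k.
Hypothesis card_flags_eq : #|left| = #|right|.
Hypothesis f_match : matching (complementary m t) left right f.

Definition matching_block (Y : 'M[F]_k) : {set 'M[F]_k * 'M[F]_k} :=
  f @: [set p in left | p.1 == Y].

Definition subspace_cover : {set {set 'M[F]_k * 'M[F]_k}} :=
  [set matching_block Y | Y in subspaces F k m].

Lemma f_flags_inj : {in left &, injective f}.
Proof. by case: f_match. Qed.

Lemma f_flags_compl Y X : (Y, X) \in left ->
  [/\ f (Y, X) \in right, (f (Y, X)).2 = X & \rank (Y + (f (Y, X)).1)%MS = m + t].
Proof.
case: f_match => _ f_nbhd /f_nbhd; rewrite inE /complementary /=.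
by case/and3P=> fR /eqP -> /eqP ->.
Qed.

Lemma image_f_flags : f @: left = right.
Proof.
apply/eqP; rewrite eqEcard card_in_imset; last exact: f_flags_inj.
rewrite card_flags_eq leqnn andbT.
by apply/subsetP => _ /imsetP[[Y X] YX ->]; have [] := f_flags_compl YX.
Qed.

Lemma mem_matching_block Y p : p \in matching_block Y ->
  [/\ p \in right, (Y <= p.2)%MS, \rank (Y + p.1)%MS = m + t & p = f (Y, p.2)].
Proof.
case/imsetP => -[Y' X]; rewrite inE => /andP[YX /eqP /= eY] ->; subst Y'.
have [fR fX rYf] := f_flags_compl YX; rewrite fX; split=> //.
by move: YX; rewrite mem_flags => /and3P[].
Qed.

Lemma matching_block_disjoint Y1 Y2 p :
  p \in matching_block Y1 -> p \in matching_block Y2 -> Y1 = Y2.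
Proof.
case/imsetP => -[Y1' X1]; rewrite inE => /andP[YX1 /eqP /= <-] ->.
case/imsetP => -[Y2' X2]; rewrite inE => /andP[YX2 /eqP /= <-].
by move/(f_flags_inj YX1 YX2) => [].
Qed.

(* Both [X]s contain the [m + t]-dimensional space [Y + V1]. *)
Lemma matching_block_cross Y V1 X1 V2 X2 :
  (V1, X1) \in matching_block Y -> (V2, X2) \in matching_block Y -> (V1 <= X2)%MS ->
  (V1, X1) = (V2, X2).
Proof.
case/mem_matching_block; rewrite mem_flags => /and3P[_ X1S V1X1] /= YX1 rYV1 e1.
case/mem_matching_block; rewrite mem_flags => /and3P[_ X2S _] /= YX2 _ e2 V1X2.
have eX : X1 = X2.
  rewrite -(subspace_eq_genmx X1S _ rYV1) ?(subspace_eq_genmx X2S _ rYV1) //.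
    by rewrite addsmx_sub YX2 V1X2.
  by rewrite addsmx_sub YX1 V1X1.
by rewrite e1 e2 eX.
Qed.

Lemma matching_block_induced Y : induced_matching (subspaces F k t) (subspaces F k (m + t))
  (fun V X => (V <= X)%MS) (matching_block Y).
Proof.
apply/andP; split; first by apply/subsetP => p /mem_matching_block[].
have sub_flag V X : (V, X) \in matching_block Y -> (V <= X)%MS.
  by case/mem_matching_block; rewrite mem_flags => /and3P[].
apply/forall_inP => -[V1 X1] p1Y; apply/forall_inP => -[V2 X2] p2Y; apply/implyP => neq12.
have cross12 : ~~ (V1 <= X2)%MS by apply: contra neq12 => /(matching_block_cross p1Y p2Y) ->.
have cross21 : ~~ (V2 <= X1)%MS by apply: contra neq12 => /(matching_block_cross p2Y p1Y) ->.
rewrite /= cross12 cross21 !andbT; apply/andP; split.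
  by apply: contraNneq cross21 => <-; apply: sub_flag p1Y.
by apply: contraNneq cross12 => <-; apply: sub_flag p1Y.
Qed.

Lemma card_matching_block Y : Y \in subspaces F k m ->
  #|matching_block Y| = gauss_binom q (k - m) t.
Proof.
move=> YS; rewrite card_in_imset; last first.
  by move=> p1 p2 /setIdP[p1L _] /setIdP[p2L _]; apply: f_flags_inj.
have -> : [set p in left | p.1 == Y] = [set (Y, X) | X in superspaces Y (m + t)].
  apply/setP => -[Y' X]; rewrite inE mem_flags /=; apply/andP/imsetP.
    by case=> /and3P[_ XS YX] /eqP eY; subst Y'; exists X; rewrite // inE XS.
  by case=> X' + [-> ->]; rewrite inE => /andP[XS YX]; rewrite YS XS YX eqxx.
rewrite card_imset; last by move=> X1 X2 [].
exact: card_superspaces (rank_subspaces YS) le_mtk.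
Qed.

Lemma matching_block_neq0 Y : Y \in subspaces F k m -> matching_block Y != set0.
Proof.
move=> YS; rewrite -card_gt0 card_matching_block //.
by apply: gauss_binom_gt0; [exact: card_finNzRing_gt1 | lia].
Qed.

Lemma subspace_cover_partition : partition subspace_cover right.
Proof.
apply/and3P; split.
- rewrite eqEsubset; apply/andP; split.
    by apply/bigcupsP => _ /imsetP[Y _ ->]; apply/subsetP => p /mem_matching_block[].
  rewrite -image_f_flags; apply/subsetP => _ /imsetP[[Y X] YX ->].
  apply/bigcupP; exists (matching_block Y).
    by apply/imsetP; exists Y => //; move: YX; rewrite mem_flags => /and3P[].
  by apply/imsetP; exists (Y, X); rewrite // inE YX eqxx.
- apply/trivIsetP => _ _ /imsetP[Y1 _ ->] /imsetP[Y2 _ ->] neqB.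
  rewrite disjoints_subset; apply/subsetP => p pY1; rewrite inE; apply: contra neqB => pY2.
  by rewrite (matching_block_disjoint pY1 pY2).
- by apply/imsetP => -[Y YS e0]; move: (matching_block_neq0 YS); rewrite -e0 eqxx.
Qed.

Lemma card_subspace_cover : #|subspace_cover| = gauss_binom q k m.
Proof.
rewrite card_in_imset => [|Y1 Y2 Y1S _ eB]; first by apply: card_subspaces; lia.
have /set0Pn[p pY1] := matching_block_neq0 Y1S.
by apply: matching_block_disjoint (pY1) _; rewrite -eB.
Qed.

Lemma subspace_cover_spec :
  [/\ induced_matching_cover (subspaces F k t) (subspaces F k (m + t))
        (fun V X => (V <= X)%MS) subspace_cover,
      #|subspace_cover| = gauss_binom q k m &
      forall C, C \in subspace_cover -> #|C| = gauss_binom q (k - m) t].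
Proof.
split; last by move=> _ /imsetP[Y YS ->]; apply: card_matching_block.
  apply/andP; split; first exact: subspace_cover_partition.
  by apply/forall_inP => _ /imsetP[Y _ ->]; apply: matching_block_induced.
exact: card_subspace_cover.
Qed.

End SubspaceCover.

Local Open Scope ring_scope.

Lemma caching_gain_eq (K D S g Fn : nat) :
  (K * D = S * g)%N -> Fn != 0%N -> S != 0%N ->
  caching_gain K (cache_fraction D Fn) (caching_rate S Fn) = g%:R.
Proof.
rewrite -!(pnatr_eq0 rat) => KD Fn0 S0.
have -> : g%:R = K%:R * D%:R / S%:R :> rat by rewrite -natrM KD natrM mulrAC divff ?mul1r.
by rewrite /caching_gain /cache_fraction /caching_rate; field; apply/andP.
Qed.

Theorem theorem2 (F : finFieldType) (k m t : nat)
    (hm : (0 < m)%N) (ht : (0 < t)%N) (hmtk : (m + t <= k)%N) :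
  let q := #|F| in
  let L := subspaces F k t in
  let R := subspaces F k (m + t) in
  let e := fun V X : 'M[F]_k => (V <= X)%MS in
  let K := gauss_binom q k t in
  let Fn := gauss_binom q k (m + t) in
  let S := gauss_binom q k m in
  let g := gauss_binom q (k - m) t in
  (exists D : nat, caching_graph L R e K Fn D) /\
  (exists P : {set {set 'M[F]_k * 'M[F]_k}},
      [/\ induced_matching_cover L R e P, #|P| = S &
          forall C, C \in P -> #|C| = g]) /\
  (forall D : nat, caching_graph L R e K Fn D ->
     [/\ cache_fraction D Fn =
           1 - (gauss_binom q (k - t) m)%:R / Fn%:R,
         caching_rate S Fn = S%:R / Fn%:R &
         caching_gain K (cache_fraction D Fn) (caching_rate S Fn) = g%:R]).
Proof.
move=> q L R e K Fn S g.
have q_gt1 : (1 < q)%N := card_finNzRing_gt1 F.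
have [card_flags_eq [f f_match]] := complementary_perfect_matching F k m t.
have degL V : V \in L -> #|nbhd R e V| = gauss_binom q (k - t) m.
  by move=> VL; rewrite /R addnC; apply: card_superspaces (rank_subspaces VL) _; rewrite addnC.
split.
  exists (gauss_binom q (k - t) m).
  by split; [| split; last exact: degL]; apply: card_subspaces; lia.
split; first by exists (subspace_cover m t f); apply: subspace_cover_spec.
move=> D [_ [_ degD]].
have /set0Pn[V VL] : L != set0 by rewrite -card_gt0 card_subspaces ?gauss_binom_gt0 //; lia.
have eD : D = gauss_binom q (k - t) m by rewrite -(degD V VL) degL.
split; [by rewrite eD | by [] | apply: caching_gain_eq].
- have card_edges : #|flags F k t (m + t)| = (K * gauss_binom q (k - t) m)%N.
    by rewrite addnC card_flags //; lia.
  by rewrite eD -card_edges -card_flags_eq card_flags.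
- by rewrite -lt0n gauss_binom_gt0.
- by rewrite -lt0n gauss_binom_gt0 //; lia.
Qed.
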